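(* Let $K$ be an uncountable algebraically closed field of characteristic zero, $m,n\ge1$, and $P_1,\ldots,P_s\in K[[t_1,\ldots,t_m]]\{x_1,\ldots,x_n\}$. Let $S=(S_1,\ldots,S_n)$ with $S_i\subseteq\mathbb{Z}_{\ge0}^m$. If there is no $\varphi\in K[[t_1,\ldots,t_m]]^n$ with $P_1(\varphi)=\cdots=P_s(\varphi)=0$ and $\operatorname{Supp}(\varphi)=S$, then there exists $k\ge0$ such that $A_{k,S}=\emptyset$.
   Context: Notation: $t^J=t_1^{j_1}\cdots t_m^{j_m}$, $\|J\|_\infty=\max_ij_i$, $\Theta(J)=\partial_{t_1}^{j_1}\cdots\partial_{t_m}^{j_m}$. $K[[t_1,\ldots,t_m]]\{x_1,\ldots,x_n\}$ is the polynomial ring over $K[[t_1,\ldots,t_m]]$ in indeterminates $x_{i,J}$ ($1\le i\le n$, $J\in\mathbb{Z}_{\ge0}^m$), with derivations $\partial_{t_k}$ extended by $\partial_{t_k}x_{i,J}=x_{i,J+e_k}$; $P(\varphi)$ is obtained by substituting $\Theta(J)\varphi_i$ for $x_{i,J}$. $\operatorname{Supp}(\sum a_Jt^J)=\{J:a_J\ne0\}$, componentwise on tuples. For $1\le\ell\le s$, $I\in\mathbb{Z}_{\ge0}^m$, $F_{\ell,I}=(\Theta(I)P_\ell)|_{t_1=\cdots=t_m=0}\in K[x_{i,J}]$. For each $k\ge0$, $N_k\ge0$ is minimal such that every $F_{\ell,I}$ with $1\le\ell\le s$, $\|I\|_\infty\le k$ lies in $K[x_{i,J}:1\le i\le n,\|J\|_\infty\le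 N_k]$. $A_k$ is the set of tuples $(a_{i,J})_{1\le i\le n,\|J\|_\infty\le N_k}\in K^{n\times\{0,\ldots,N_k\}^m}$ with $F_{\ell,I}((a_{i,J}))=0$ for all $1\le\ell\le s$, $\|I\|_\infty\le k$; and $A_{k,S}=\{(a_{i,J})\in A_k: a_{i,J}=0 \iff J\notin S_i\}$. *)

From HB Require Import structures.
From mathcomp Require Import all_boot all_order all_algebra.
Set Implicit Arguments. Unset Strict Implicit. Unset Printing Implicit Defensive.
Import GRing.Theory.
Local Open Scope ring_scope.

Section DiffPoly.
Variable K : fieldType.
Variables m n : nat.

Definition mi := {ffun 'I_m -> nat}.
Definition mnorm (J : mi) : nat := (\max_(k < m) J k)%N.
Definition mi0 : mi := [ffun => 0%N].
Definition miadd (J L : mi) : mi := [ffun k => (J k + L k)%N].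
Definition misub (J L : mi) : mi := [ffun k => (J k - L k)%N].
Definition unit_mi (k : 'I_m) : mi := [ffun k' => nat_of_bool (k' == k)].
Definition mile (L J : mi) : bool := [forall k, (L k <= J k)%N].

(* formal power series in K[[t_1,...,t_m]], given by coefficient functions *)
Definition pser := mi -> K.
Definition pzero : pser := fun _ => 0.
Definition pone : pser := fun J => if J == mi0 then 1 else 0.
Definition padd (f g : pser) : pser := fun J => f J + g J.
Definition pmul (f g : pser) : pser := fun J =>
  \sum_(L : {ffun 'I_m -> 'I_(mnorm J).+1} | mile [ffun k => val (L k)] J)
     f [ffun k => val (L k)] * g (misub J [ffun k => val (L k)]).
Definition pderiv (k : 'I_m) (f : pser) : pser :=
  fun J => (J k).+1%:R * f (miadd J (unit_mi k)).
Definition Theta (J : mi) (f : pser) : pser :=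
  foldr (fun k g => iter (J k) (pderiv k) g) f (enum 'I_m).
Definition Supp (f : pser) : mi -> Prop := fun J => f J != 0.

(* differential indeterminates x_{i,J} *)
Definition var := ('I_n * mi)%type.
(* a differential polynomial: a finite formal sum of terms c * prod x_{i,J},
   c in K[[t]], the monomial given as a multiset (list) of indeterminates *)
Definition dpoly := seq (pser * seq var).

Definition evalmon (phi : 'I_n -> pser) (mon : seq var) : pser :=
  foldr (fun v acc => pmul (Theta v.2 (phi v.1)) acc) pone mon.
Definition dpeval (P : dpoly) (phi : 'I_n -> pser) : pser :=
  foldr (fun t acc => padd (pmul t.1 (evalmon phi t.2)) acc) pzero P.

(* extension of d/dt_k to the differential polynomial ring:
   d/dt_k x_{i,J} = x_{i,J+e_k}, Leibniz rule *)
Definition shiftv (k : 'I_m) (v : var) : var := (v.1, miadd v.2 (unit_mi k)).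
Fixpoint mon_derivs (k : 'I_m) (mon : seq var) : seq (seq var) :=
  match mon with
  | [::] => [::]
  | v :: mon' => (shiftv k v :: mon') :: [seq v :: mu | mu <- mon_derivs k mon']
  end.
Definition dpderiv (k : 'I_m) (P : dpoly) : dpoly :=
  flatten [seq (pderiv k t.1, t.2) :: [seq (t.1, mu) | mu <- mon_derivs k t.2] | t <- P].
Definition dpTheta (J : mi) (P : dpoly) : dpoly :=
  foldr (fun k Q => iter (J k) (dpderiv k) Q) P (enum 'I_m).

(* polynomials in K[x_{i,J}] as finite formal sums *)
Definition kpoly := seq (K * seq var).
(* substitution t_1 = ... = t_m = 0 *)
Definition at_zero (P : dpoly) : kpoly := [seq (t.1 mi0, t.2) | t <- P].
Definition kcoef (F : kpoly) (mu : seq var) : K :=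
  \sum_(t <- F | perm_eq t.2 mu) t.1.
Definition in_subring (N : nat) (F : kpoly) : Prop :=
  forall mu : seq var, kcoef F mu != 0 -> all (fun v => (mnorm v.2 <= N)%N) mu.
Definition keval (F : kpoly) (a : 'I_n -> mi -> K) : K :=
  \sum_(t <- F) t.1 * \prod_(v <- t.2) a v.1 v.2.

Variable s : nat.
Variable Ps : 'I_s -> dpoly.

Definition Fpoly (l : 'I_s) (I : mi) : kpoly := at_zero (dpTheta I (Ps l)).

Definition bounds_ok (k N : nat) : Prop :=
  forall (l : 'I_s) (I : mi), (mnorm I <= k)%N -> in_subring N (Fpoly l I).
Definition isNk (k N : nat) : Prop :=
  bounds_ok k N /\ forall N', bounds_ok k N' -> (N <= N')%N.

Definition tupl (N : nat) := 'I_n -> {ffun 'I_m -> 'I_N.+1} -> K.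
Definition lowJ (N : nat) (J : {ffun 'I_m -> 'I_N.+1}) : mi := [ffun k => val (J k)].
Definition ext_tupl (N : nat) (a : tupl N) : 'I_n -> mi -> K :=
  fun i J => if (mnorm J <= N)%N then a i [ffun k => inord (J k)] else 0.

Definition in_A (k N : nat) (a : tupl N) : Prop :=
  forall (l : 'I_s) (I : mi), (mnorm I <= k)%N -> keval (Fpoly l I) (ext_tupl a) = 0.
Definition in_AS (k N : nat) (S : 'I_n -> mi -> Prop) (a : tupl N) : Prop :=
  in_A k a /\ forall i J, a i J = 0 <-> ~ S i (lowJ J).

End DiffPoly.

From HB Require Import structures.
From mathcomp Require Import all_boot all_order all_algebra all_field.
From Stdlib Require Import Classical ClassicalEpsilon FunctionalExtensionality.
Set Implicit Arguments. Unset Strict Implicit. Unset Printing Implicit Defensive.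
Import GRing.Theory.
Local Open Scope ring_scope.

(* Suppose every A_{k,S} is nonempty.  Since Theta(J) phi_i (0) is J! times the J-th
   coefficient of phi_i, and Theta(I) commutes with evaluating differential polynomials,
   in characteristic zero a solution phi with support S amounts to values a_{i,J} with
   F_{l,I}(a) = 0 for all l, I, and a_{i,J} <> 0 exactly when J is in S_i.  The part of
   these conditions with multi-indices of norm at most k involves finitely many unknowns,
   is expressed by a first-order formula, and is satisfiable thanks to A_{k,S}.  Fix the
   unknowns one at a time: by quantifier elimination the admissible values of the next
   unknown at level k form a finite or cofinite subset of K, nonempty and decreasing in k.
   As K is uncountable, such a chain has a common point (countably many finite sets
   cannot cover K), and the induction goes through. *)

Section PowerSeries.
Variables (K : fieldType) (m : nat).
Local Notation mi := (mi m).
Local Notation pser := (pser K m).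

Definition tomi B (L : {ffun 'I_m -> 'I_B.+1}) : mi := [ffun k => val (L k)].

(* The sum over L <= J in the definition of [pmul], with the L range coded in [{0..B}^m]. *)
Definition bsum B (J : mi) (F : mi -> K) :=
  \sum_(L : {ffun 'I_m -> 'I_B.+1} | mile (tomi L) J) F (tomi L).

Lemma pmulE (f g : pser) J :
  pmul f g J = bsum (mnorm J) J (fun L => f L * g (misub J L)).
Proof. by []. Qed.

Lemma leq_mnorm (J : mi) k : (J k <= mnorm J)%N.
Proof. by rewrite /mnorm; apply: (@leq_bigmax _ (fun k => J k)). Qed.

Lemma mnorm_leq (J : mi) B : (forall k, J k <= B)%N -> (mnorm J <= B)%N.
Proof. by move=> h; rewrite /mnorm; apply/bigmax_leqP => k _; apply: h. Qed.

Lemma val_inordK p x : (x < p.+1)%N -> \val (@inord p x) = x.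
Proof. exact: inordK. Qed.

Lemma mileP (L J : mi) : reflect (forall k, L k <= J k)%N (mile L J).
Proof. exact: forallP. Qed.

Lemma mnorm_addu (J : mi) k : (mnorm (miadd J (unit_mi k)) <= (mnorm J).+1)%N.
Proof.
apply: mnorm_leq => j; rewrite !ffunE.
by apply: leq_trans (leq_add (leq_mnorm J j) (leq_b1 _)) _; rewrite addn1.
Qed.

Lemma mnorm0 : mnorm (mi0 m) = 0%N.
Proof. by apply/eqP; rewrite -leqn0; apply: mnorm_leq => k; rewrite ffunE. Qed.

Lemma bsum_widen B J F : (mnorm J <= B)%N -> bsum B J F = bsum (mnorm J) J F.
Proof.
move=> hB; rewrite /bsum.
pose h (L : {ffun 'I_m -> 'I_(mnorm J).+1}) : {ffun 'I_m -> 'I_B.+1} :=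
  [ffun k => inord (val (L k))].
pose h' (L : {ffun 'I_m -> 'I_B.+1}) : {ffun 'I_m -> 'I_(mnorm J).+1} :=
  [ffun k => inord (val (L k))].
have htomi L : tomi (h L) = tomi L.
  apply/ffunP=> k; rewrite /tomi /h !ffunE val_inordK //.
  exact: leq_trans (ltn_ord (L k)) _.
rewrite (reindex_onto h h') /=.
  apply: eq_big => [L|L _]; rewrite htomi //; case: (mile _ _) => //=.
  apply/eqP/ffunP => k; rewrite /h /h' !ffunE; apply: val_inj => /=.
  by rewrite !val_inordK //; apply: leq_trans (ltn_ord (L k)) _.
move=> L /mileP hL; apply/ffunP => k; rewrite /h /h' !ffunE; apply: val_inj => /=.
have hk : (L k <= mnorm J)%N.
  by apply: leq_trans (leq_mnorm J k); move: (hL k); rewrite ffunE.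
by rewrite !val_inordK //; apply: leq_trans hB.
Qed.

Lemma unit_mi_k (k : 'I_m) : unit_mi k k = 1%N.
Proof. by rewrite ffunE eqxx. Qed.

Lemma unit_mi_neq (k j : 'I_m) : j != k -> unit_mi k j = 0%N.
Proof. by rewrite ffunE => /negbTE ->. Qed.

Section Shift.
Variables (B : nat) (J : mi) (k : 'I_m).
Local Notation e := (unit_mi k).

Hypothesis JB : (mnorm J < B)%N.

Lemma J_lt_B j : (J j < B)%N.
Proof. exact: leq_ltn_trans (leq_mnorm J j) JB. Qed.

Definition shift (L : {ffun 'I_m -> 'I_B.+1}) : {ffun 'I_m -> 'I_B.+1} :=
  [ffun j => inord (tomi L j + e j)].
Definition unshift (L : {ffun 'I_m -> 'I_B.+1}) : {ffun 'I_m -> 'I_B.+1} :=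
  [ffun j => inord (tomi L j - e j)].

Lemma tomi_shift L : (tomi L k < B)%N -> tomi (shift L) = miadd (tomi L) e.
Proof.
move=> hL; apply/ffunP => j; rewrite /shift !ffunE val_inordK //.
rewrite ffunE in hL; case: eqP => [->|_]; first by rewrite addn1 ltnS.
by rewrite addn0; apply: leq_trans (ltn_ord (L j)) _.
Qed.

Lemma shiftK_cond L :
  (mile (tomi (shift L)) (miadd J e) && (tomi (shift L) k != 0%N))
    && (unshift (shift L) == L) = mile (tomi L) J.
Proof.
case hB: (tomi L k < B)%N.
  rewrite tomi_shift //.
  have -> : mile (miadd (tomi L) e) (miadd J e) = mile (tomi L) J.
    by apply: eq_forallb => j; rewrite !ffunE leq_add2r.
  rewrite [miadd _ _ k]ffunE unit_mi_k addn1 /= andbT.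
  case: (mile _ _) => //=; apply/eqP/ffunP => j; apply: val_inj.
  rewrite /unshift !ffunE.
  have := tomi_shift hB => /ffunP /(_ j); rewrite !ffunE => ->.
  by rewrite addnK val_inordK //; apply: ltn_ord.
have -> : tomi (shift L) k = 0%N.
  rewrite /shift !ffunE /inord val_insubd eqxx addn1 ltnS.
  by move: hB; rewrite ffunE => ->.
rewrite andbF /=; apply/esym/negbTE/negP => /mileP /(_ k).
move/negbT: hB; rewrite -leqNgt => hB hL.
by have := leq_trans hB hL; rewrite leqNgt J_lt_B.
Qed.

Lemma unshiftK L : tomi L k != 0%N -> shift (unshift L) = L.
Proof.
move=> hk; apply/ffunP => j; apply: val_inj; rewrite /shift /unshift !ffunE /=.
have Lj := ltn_ord (L j).
have hLk : ((j == k) <= L j)%N.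
  by case: eqP => [->|_] //; move: hk; rewrite ffunE lt0n.
by rewrite !val_inordK ?subnK // (leq_ltn_trans (leq_subr _ _)).
Qed.

(* Summing L_k F(L) over L <= J + e_k is summing over L = L' + e_k with L' <= J. *)
Lemma bsum_shift F :
  bsum B (miadd J e) (fun L => (L k)%:R * F L) =
  bsum B J (fun L => (L k).+1%:R * F (miadd L e)).
Proof.
rewrite /bsum [LHS](bigID (fun L => tomi L k == 0%N)) /= big1 ?add0r; last first.
  by move=> L /andP [_ /eqP ->]; rewrite mul0r.
rewrite (reindex_onto shift unshift) => [|L /andP [_]]; last exact: unshiftK.
apply: eq_big => L; first exact: shiftK_cond.
rewrite shiftK_cond => hL.
have hLk : (tomi L k < B)%N by apply: leq_ltn_trans (J_lt_B k); move/mileP: hL; apply.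
by rewrite tomi_shift // [miadd _ _ k]ffunE unit_mi_k addn1.
Qed.

(* The only extra term, L_k = J_k + 1, has weight zero. *)
Lemma bsum_drop_top F :
  bsum B (miadd J e) (fun L => ((J k).+1 - L k)%:R * F L) =
  bsum B J (fun L => ((J k).+1 - L k)%:R * F L).
Proof.
rewrite /bsum big_mkcond [RHS]big_mkcond /=; apply: eq_bigr => L _.
case mLJ: (mile (tomi L) J).
  suff -> : mile (tomi L) (miadd J e) by [].
  apply/mileP => j; rewrite [miadd _ _ _]ffunE.
  exact: leq_trans (mileP _ _ mLJ j) (leq_addr _ _).
case mLJe: (mile (tomi L) (miadd J e)) => //.
have [j hj] := forallPn (negbT mLJ); rewrite -ltnNge in hj.
have hj' := mileP _ _ mLJe j; rewrite [miadd _ _ _]ffunE in hj'.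
have jk : j = k.
  apply/eqP/negPn/negP => /unit_mi_neq hej.
  by move: hj'; rewrite hej addn0 leqNgt hj.
subst j; rewrite unit_mi_k addn1 in hj'.
have -> : tomi L k = (J k).+1 by apply/eqP; rewrite eqn_leq hj' hj.
by rewrite subnn mul0r.
Qed.

End Shift.

Lemma pderiv_pmul k (f g : pser) :
  pderiv k (pmul f g) = padd (pmul (pderiv k f) g) (pmul f (pderiv k g)).
Proof.
apply: functional_extensionality => J.
set B := (mnorm J).+1.
rewrite /pderiv /padd !pmulE -(bsum_widen _ (mnorm_addu J k)).
rewrite -(@bsum_widen B J) ?leqnSn // -(@bsum_widen B J) ?leqnSn //.
set h := fun L => f L * g (misub (miadd J (unit_mi k)) L).
have split_weight : (J k).+1%:R * bsum B (miadd J (unit_mi k)) h =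
   bsum B (miadd J (unit_mi k)) (fun L => (L k)%:R * h L) +
   bsum B (miadd J (unit_mi k)) (fun L => ((J k).+1 - L k)%:R * h L).
  rewrite /bsum mulr_sumr -big_split /=; apply: eq_bigr => L /mileP hL /=.
  rewrite -mulrDl -natrD subnKC //.
  by move: (hL k); rewrite [miadd _ _ _]ffunE unit_mi_k addn1.
rewrite split_weight bsum_shift ?ltnSn // bsum_drop_top; congr (_ + _).
  apply: eq_bigr => L _; rewrite /h mulrA; congr (_ * g _).
  by apply/ffunP => j; rewrite !ffunE subnDr.
apply: eq_bigr => L /mileP hL; have hv j : (\val (L j) <= J j)%N.
  by have := hL j; rewrite ffunE.
rewrite /h mulrCA; congr (_ * (_ * g _)).
  by rewrite !ffunE subSn ?hv.
by apply/ffunP => j; rewrite !ffunE addnBAC ?hv.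
Qed.

Lemma padd0p (f : pser) : padd (@pzero K m) f = f.
Proof. by apply: functional_extensionality => J; rewrite /padd /pzero add0r. Qed.

Lemma paddA (f g h : pser) : padd f (padd g h) = padd (padd f g) h.
Proof. by apply: functional_extensionality => J; rewrite /padd addrA. Qed.

Lemma pmulDr (f g h : pser) : pmul f (padd g h) = padd (pmul f g) (pmul f h).
Proof.
apply: functional_extensionality => J; rewrite /padd !pmulE /bsum -big_split /=.
by apply: eq_bigr => L _; rewrite mulrDr.
Qed.

Lemma pmulp0 (f : pser) : pmul f (@pzero K m) = @pzero K m.
Proof.
apply: functional_extensionality => J; rewrite pmulE /bsum /pzero big1 // => L _.
by rewrite mulr0.
Qed.

Lemma pderiv_padd k (f g : pser) : pderiv k (padd f g) = padd (pderiv k f) (pderiv k g).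
Proof. by apply: functional_extensionality => J; rewrite /padd /pderiv mulrDr. Qed.

Lemma pderiv_pzero k : pderiv k (@pzero K m) = @pzero K m.
Proof. by apply: functional_extensionality => J; rewrite /pzero /pderiv mulr0. Qed.

Lemma pderiv_pone k : pderiv k (@pone K m) = @pzero K m.
Proof.
apply: functional_extensionality => J; rewrite /pderiv /pone /pzero.
case: eqP => [/ffunP /(_ k)|]; last by rewrite mulr0.
by rewrite !ffunE eqxx addn1.
Qed.

Definition rising (j c : nat) : K := \prod_(r < c) ((j + r).+1)%:R.

Lemma risingS j c : rising j c.+1 = (j.+1)%:R * rising j.+1 c.
Proof.
rewrite /rising big_ord_recl /= addn0; congr (_ * _).
by apply: eq_bigr => i _; rewrite /= addSnnS.
Qed.

Definition cunit (k : 'I_m) (c : nat) : mi := [ffun j => if j == k then c else 0%N].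

Lemma iter_pderivE k c (g : pser) J :
  iter c (pderiv k) g J = rising (J k) c * g (miadd J (cunit k c)).
Proof.
elim: c J => [|c IH] J /=.
  rewrite /rising big_ord0 mul1r; congr g; apply/ffunP => j; rewrite !ffunE.
  by case: ifP; rewrite addn0.
rewrite /pderiv IH risingS mulrA; congr (_ * _ * g _).
  by rewrite !ffunE eqxx addn1.
apply/ffunP => j; rewrite !ffunE; case: eqP => [->|_]; last by rewrite !addn0.
by rewrite -addnA add1n.
Qed.

Definition restrict (I : mi) (r : seq 'I_m) : mi :=
  [ffun j => if j \in r then I j else 0%N].

Lemma foldr_iter_pderivE (I : mi) (f : pser) (r : seq 'I_m) J : uniq r ->
  foldr (fun k g => iter (I k) (pderiv k) g) f r J =
  (\prod_(k <- r) rising (J k) (I k)) * f (miadd J (restrict I r)).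
Proof.
elim: r J => [|k r IH] J /=.
  move=> _; rewrite big_nil mul1r; congr f; apply/ffunP => j.
  by rewrite !ffunE in_nil addn0.
move=> /andP [kr ur]; rewrite iter_pderivE IH // big_cons -mulrA.
congr (_ * (_ * f _)).
  apply: eq_big_seq => j jr; rewrite !ffunE.
  case: ifP => [/eqP ejk|_]; last by rewrite addn0.
  by move: kr; rewrite -ejk jr.
apply/ffunP => j; rewrite !ffunE in_cons.
case: ifP => [/eqP ->|_] /=; last by rewrite addn0.
by rewrite (negbTE kr) addn0.
Qed.

Lemma ThetaE (I : mi) (f : pser) J :
  Theta I f J = (\prod_(k <- enum 'I_m) rising (J k) (I k)) * f (miadd J I).
Proof.
rewrite /Theta foldr_iter_pderivE ?enum_uniq //; congr (_ * f _).
by apply/ffunP => j; rewrite !ffunE mem_enum.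
Qed.

Lemma pderiv_Theta k (I : mi) (f : pser) :
  pderiv k (Theta I f) = Theta (miadd I (unit_mi k)) f.
Proof.
apply: functional_extensionality => J; rewrite /pderiv !ThetaE.
have -> : miadd (miadd J (unit_mi k)) I = miadd J (miadd I (unit_mi k)).
  by apply/ffunP => j; rewrite !ffunE addnAC addnA.
rewrite mulrA; congr (_ * _).
rewrite !(bigD1_seq k) ?mem_enum ?enum_uniq //= mulrA; congr (_ * _).
  by rewrite !ffunE eqxx !addn1 risingS.
apply: eq_bigr => j hj; rewrite !ffunE.
by move: hj; case: eqP => // _ _; rewrite !addn0.
Qed.

Definition mifact (I : mi) : K := \prod_(k <- enum 'I_m) rising 0 (I k).

Lemma Theta_at0 (I : mi) (f : pser) : Theta I f (mi0 m) = mifact I * f I.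
Proof.
rewrite ThetaE /mifact; congr (_ * f _).
  by apply: eq_bigr => k _; rewrite ffunE.
by apply/ffunP => j; rewrite !ffunE.
Qed.

Lemma mifact_neq0 (I : mi) : [pchar K] =i pred0 -> mifact I != 0.
Proof.
move=> ch; rewrite /mifact prodf_seq_neq0; apply/allP => k _ /=.
by rewrite /rising; apply/prodf_neq0 => r _; move/pcharf0P: ch => ->.
Qed.

Lemma pmul_at0 (f g : pser) : pmul f g (mi0 m) = f (mi0 m) * g (mi0 m).
Proof.
rewrite pmulE -(@bsum_widen 0) ?mnorm0 // /bsum.
pose L0 : {ffun 'I_m -> 'I_1} := [ffun => ord0].
have tL0 : tomi L0 = mi0 m by apply/ffunP => j; rewrite !ffunE.
rewrite (big_pred1 L0) ?tL0.
  by congr (_ * g _); apply/ffunP => j; rewrite !ffunE.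
move=> L /=; have -> : L = L0 by apply/ffunP => j; rewrite ffunE; apply: ord1.
by rewrite eqxx tL0; apply/forallP => j; rewrite ffunE.
Qed.

Section DiffPolyEval.
Variables (n : nat) (phi : 'I_n -> pser).

Definition sum_evalmon (L : seq (seq (var m n))) : pser :=
  foldr (fun mu acc => padd (evalmon phi mu) acc) (@pzero K m) L.

Lemma sum_evalmon_cons v D :
  sum_evalmon [seq v :: mu | mu <- D] = pmul (Theta v.2 (phi v.1)) (sum_evalmon D).
Proof.
elim: D => [|mu D IH] /=; first by rewrite pmulp0.
by rewrite IH pmulDr.
Qed.

Lemma pderiv_evalmon k mon :
  pderiv k (evalmon phi mon) = sum_evalmon (mon_derivs k mon).
Proof.
elim: mon => [|v mon IH] /=; first by rewrite /evalmon pderiv_pone.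
by rewrite pderiv_pmul pderiv_Theta sum_evalmon_cons -IH.
Qed.

Lemma dpeval_cat (A B : dpoly K m n) :
  dpeval (A ++ B) phi = padd (dpeval A phi) (dpeval B phi).
Proof.
elim: A => [|t A IH] /=; first by rewrite padd0p.
by rewrite /dpeval /= -/(dpeval A phi) -/(dpeval (A ++ B) phi) IH paddA.
Qed.

Lemma dpeval_map c D : dpeval [seq (c, mu) | mu <- D] phi = pmul c (sum_evalmon D).
Proof.
elim: D => [|mu D IH] /=; first by rewrite pmulp0.
by rewrite /dpeval /= -/(dpeval _ phi) IH pmulDr.
Qed.

Lemma pderiv_dpeval k (P : dpoly K m n) :
  pderiv k (dpeval P phi) = dpeval (dpderiv k P) phi.
Proof.
elim: P => [|t P IH]; first by rewrite /dpeval /= pderiv_pzero.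
rewrite /dpderiv /= -/(dpderiv k P) dpeval_cat -IH.
rewrite /dpeval /= -/(dpeval P phi) -/(dpeval _ phi).
by rewrite dpeval_map pderiv_padd pderiv_pmul pderiv_evalmon paddA.
Qed.

Lemma Theta_dpeval (I : mi) (P : dpoly K m n) :
  Theta I (dpeval P phi) = dpeval (dpTheta I P) phi.
Proof.
rewrite /Theta /dpTheta; elim: (enum 'I_m) => [|k r IH] //=.
by rewrite IH; elim: (I k) => [|c IHc] //=; rewrite IHc pderiv_dpeval.
Qed.

Lemma evalmon_at0 mon :
  evalmon phi mon (mi0 m) = \prod_(v <- mon) Theta v.2 (phi v.1) (mi0 m).
Proof.
elim: mon => [|v mon IH] /=; first by rewrite big_nil /evalmon /= /pone eqxx.
by rewrite big_cons -IH /evalmon /= pmul_at0.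
Qed.

Lemma dpeval_at0 (Q : dpoly K m n) :
  dpeval Q phi (mi0 m) = keval (at_zero Q) (fun i J => Theta J (phi i) (mi0 m)).
Proof.
rewrite /keval /at_zero big_map; elim: Q => [|t Q IH] /=; first by rewrite big_nil.
by rewrite big_cons -IH /dpeval /= /padd pmul_at0 evalmon_at0.
Qed.

End DiffPolyEval.
End PowerSeries.

Section OneVariableDefinable.
Variable K : closedFieldType.

Definition fin_or_cofin (X : K -> Prop) :=
  (exists q : {poly K}, q != 0 /\ forall x, X x -> root q x) \/
  (exists q : {poly K}, q != 0 /\ forall x, ~~ root q x -> X x).

Lemma fin_or_cofin_ext (X Y : K -> Prop) :
  (forall x, X x <-> Y x) -> fin_or_cofin X -> fin_or_cofin Y.
Proof.
move=> h [[q [q0 hq]]|[q [q0 hq]]]; [left|right]; exists q; split=> // x.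
  by move/h; apply: hq.
by move/hq/h.
Qed.

Lemma fin_or_cofin_not (X : K -> Prop) : fin_or_cofin X -> fin_or_cofin (fun x => ~ X x).
Proof.
move=> [[q [q0 hq]]|[q [q0 hq]]]; [right|left]; exists q; split=> // x.
  by move=> hr hX; move: (hq x hX); rewrite (negbTE hr).
by move=> nX; apply/negPn/negP => /hq.
Qed.

Lemma fin_or_cofin_and (X Y : K -> Prop) :
  fin_or_cofin X -> fin_or_cofin Y -> fin_or_cofin (fun x => X x /\ Y x).
Proof.
move=> [[q [q0 hq]]|[q [q0 hq]]].
  by move=> _; left; exists q; split=> // x [/hq].
move=> [[p [p0 hp]]|[p [p0 hp]]].
  by left; exists p; split=> // x [_ /hp].
right; exists (q * p); split; first by rewrite mulf_neq0.
by move=> x; rewrite rootM negb_or => /andP [/hq ? /hp ?].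
Qed.

Lemma fin_or_cofin_or (X Y : K -> Prop) :
  fin_or_cofin X -> fin_or_cofin Y -> fin_or_cofin (fun x => X x \/ Y x).
Proof.
move=> fX fY.
apply: fin_or_cofin_ext (fin_or_cofin_not (fin_or_cofin_and (fin_or_cofin_not fX)
  (fin_or_cofin_not fY))) => x; tauto.
Qed.

Lemma fin_or_cofin_bool (b : bool) : fin_or_cofin (fun _ => b).
Proof.
by case: b; [right|left]; exists 1; split => //; exact: oner_neq0.
Qed.

Lemma fin_or_cofin_root (p : {poly K}) : fin_or_cofin (root p).
Proof.
case: (eqVneq p 0) => [->|p0]; last by left; exists p.
by apply: fin_or_cofin_ext (fin_or_cofin_bool true) => x; rewrite root0.
Qed.

Section QuantifierFree.
Variables (e : seq K) (j : nat).
Local Notation at_x x := (set_nth 0 e j x).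

(* An atom [t == 0] in the variable j is a polynomial equation in x, by [abstrX]. *)
Lemma fin_or_cofin_eqs (ts : seq (GRing.term K)) : all (@GRing.rterm K) ts ->
  fin_or_cofin (fun x =>
    GRing.qf_eval (at_x x) (foldr (fun t => GRing.And (t == 0)%T) GRing.True ts)).
Proof.
elim: ts => [|t ts IH] /=; first by move=> _; apply: fin_or_cofin_bool.
case/andP=> ht /IH hts.
apply: fin_or_cofin_ext (fin_or_cofin_and
  (fin_or_cofin_root (ClosedFieldQE.eval_poly e (ClosedFieldQE.abstrX j t))) hts).
by move=> x; rewrite /= rootE ClosedFieldQE.abstrXP //; split=> [[-> ->]|/andP[-> ->]].
Qed.

Lemma fin_or_cofin_neqs (ts : seq (GRing.term K)) : all (@GRing.rterm K) ts ->
  fin_or_cofin (fun x =>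
    GRing.qf_eval (at_x x) (foldr (fun t => GRing.And (t != 0)%T) GRing.True ts)).
Proof.
elim: ts => [|t ts IH] /=; first by move=> _; apply: fin_or_cofin_bool.
case/andP=> ht /IH hts.
apply: fin_or_cofin_ext (fin_or_cofin_and (fin_or_cofin_not
  (fin_or_cofin_root (ClosedFieldQE.eval_poly e (ClosedFieldQE.abstrX j t)))) hts).
move=> x; rewrite /= rootE ClosedFieldQE.abstrXP //.
by split=> [[/negP -> ->]|/andP[/negP ? ->]].
Qed.

Lemma fin_or_cofin_qf (f : GRing.formula K) :
  GRing.qf_form f && GRing.rformula f ->
  fin_or_cofin (fun x => GRing.qf_eval (at_x x) f).
Proof.
move=> hf; apply: (fin_or_cofin_ext (X := fun x =>
  GRing.qf_eval (at_x x) (GRing.dnf_to_form (GRing.qf_to_dnf f false)))).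
  by move=> x; rewrite (GRing.qf_to_dnfP _ hf).
have : all GRing.dnf_rterm (GRing.qf_to_dnf f false).
  by apply: GRing.qf_to_dnf_rterm; case/andP: hf.
elim: (GRing.qf_to_dnf f false) => [|bc bcs IH] /=.
  by move=> _; apply: fin_or_cofin_bool.
case/andP=> /andP [h1 h2] /IH hbcs.
apply: fin_or_cofin_ext (fin_or_cofin_or
  (fin_or_cofin_and (fin_or_cofin_eqs h1) (fin_or_cofin_neqs h2)) hbcs).
by move=> x /=; rewrite -(rwP orP) -(rwP andP).
Qed.

End QuantifierFree.

Lemma fin_or_cofin_holds (f : GRing.formula K) (e : seq K) (j : nat) :
  fin_or_cofin (fun x => GRing.holds (set_nth 0 e j x) f).
Proof.
have wf := @ClosedFieldQE.wf_ex_elim K.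
have ok := @ClosedFieldQE.holds_ex_elim K (@GRing.solve_monicpoly K).
pose g := GRing.quantifier_elim (@ClosedFieldQE.ex_elim K) (GRing.to_rform f).
have hg : GRing.qf_form g && GRing.rformula g.
  exact: GRing.quantifier_elim_wf wf _ (GRing.to_rform_rformula f).
apply: fin_or_cofin_ext (fin_or_cofin_qf e j hg) => x; rewrite -(GRing.to_rformP _ f).
by split => /(GRing.quantifier_elim_rformP wf ok _ (GRing.to_rform_rformula f)).
Qed.


Lemma root_set_finite (q : {poly K}) : q != 0 ->
  exists r : seq K, forall x, root q x -> x \in r.
Proof.
move=> q0; case: (closed_field_poly_normal q) => r hr; exists r => x.
by rewrite {1}hr rootZ ?lead_coef_eq0 // root_prod_XsubC.
Qed.

Section NestedIntersection.
Hypothesis uncountable : forall f : nat -> K, exists x : K, forall j, f j != x.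

(* Countably many cofinite sets: their complements are countable, so cannot cover K. *)
Lemma cofinite_inter (Y : nat -> K -> Prop) :
  (forall k, exists q : {poly K}, q != 0 /\ forall x, ~~ root q x -> Y k x) ->
  exists x, forall k, Y k x.
Proof.
move=> cof.
pose q k := proj1_sig (constructive_indefinite_description _ (cof k)).
have hq k : q k != 0 /\ forall x, ~~ root (q k) x -> Y k x.
  by rewrite /q; case: constructive_indefinite_description.
pose r k := proj1_sig (constructive_indefinite_description _ (root_set_finite (hq k).1)).
have hr k x : root (q k) x -> x \in r k.
  by rewrite /r; case: constructive_indefinite_description => r' /= /(_ x).
pose f (i : nat) : K :=
  if @unpickle (nat * nat)%type i is Some p then nth 0 (r p.1) p.2 else 0.
have [x hx] := uncountable f.
exists x => k; apply: (hq k).2; apply/negP => /hr xin.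
have := hx (pickle (k, index x (r k))).
by rewrite /f pickleK /= nth_index // eqxx.
Qed.

Variable X : nat -> K -> Prop.
Hypothesis X_decr : forall k x, X k.+1 x -> X k x.
Hypothesis X_nonempty : forall k, exists x, X k x.

Lemma X_antimono k k' x : (k <= k')%N -> X k' x -> X k x.
Proof.
move=> /subnKC <-; elim: (k' - k)%N => [|d IH]; first by rewrite addn0.
by rewrite addnS => /X_decr /IH.
Qed.

(* Each of the finitely many candidates leaves the chain at some level; past all of
   these levels the chain would be empty. *)
Lemma nested_inter_of_finite k0 (q : {poly K}) :
  q != 0 -> (forall x, X k0 x -> root q x) -> exists x, forall k, X k x.
Proof.
move=> q0 hq; have [r hr] := root_set_finite q0.
apply: NNPP => hno.
have hy y : exists k, ~ X k y.
  by apply: NNPP => h; apply: hno; exists y => k; apply: NNPP => h'; apply: h; exists k.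
have [k1 [le_k0 hk1]] : exists k1, (k0 <= k1)%N /\ forall y, y \in r -> ~ X k1 y.
  elim: r {hr} => [|y r [k1 [h1 h2]]]; first by exists k0.
  have [ky hky] := hy y.
  exists (maxn k1 ky); split; first exact: leq_trans h1 (leq_maxl _ _).
  move=> z; rewrite in_cons => /orP [/eqP ->|zr].
    by move=> /(X_antimono (leq_maxr _ _)).
  by move=> /(X_antimono (leq_maxl _ _)); apply: h2.
have [x hx] := X_nonempty k1.
by apply: (hk1 x) => //; apply/hr/hq; apply: X_antimono hx.
Qed.

Lemma nested_fin_or_cofin_inter :
  (forall k, fin_or_cofin (X k)) -> exists x, forall k, X k x.
Proof.
move=> fX.
case: (classic (exists k0 q, q != 0 /\ forall x, X k0 x -> root q x)).
  by move=> [k0 [q [q0 hq]]]; apply: nested_inter_of_finite hq.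
move=> no_finite; apply: cofinite_inter => k.
case: (fX k) => // hfin; case: no_finite.
by case: hfin => q hq; exists k, q.
Qed.

End NestedIntersection.
End OneVariableDefinable.

Section FormulaCompactness.
Variable K : closedFieldType.
Hypothesis uncountable : forall f : nat -> K, exists x : K, forall j, f j != x.
Variables (Phi : nat -> GRing.formula K) (M : nat -> nat).
Hypothesis Phi_local : forall k (e e' : seq K),
  (forall j, (j < M k)%N -> nth 0 e j = nth 0 e' j) ->
  GRing.holds e (Phi k) -> GRing.holds e' (Phi k).
Hypothesis Phi_decr : forall k e, GRing.holds e (Phi k.+1) -> GRing.holds e (Phi k).
Hypothesis Phi_sat : forall k, exists e, GRing.holds e (Phi k).

Definition extends (e p : seq K) := forall j, (j < size p)%N -> nth 0 e j = nth 0 p j.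

Definition extendable (p : seq K) :=
  forall k, exists2 e, extends e p & GRing.holds e (Phi k).

Lemma extendable_nil : extendable [::].
Proof. by move=> k; have [e he] := Phi_sat k; exists e. Qed.

(* The extensions of a given prefix by [x] at level [k] are defined by an existential
   formula in [x], hence form a finite or cofinite set. *)
Lemma extendable_rcons p : extendable p -> exists x, extendable (rcons p x).
Proof.
move=> ext_p; pose j := size p.
apply: (nested_fin_or_cofin_inter uncountable
  (X := fun k x => exists2 e, extends e (rcons p x) & GRing.holds e (Phi k))).
- by move=> k x [e he /Phi_decr]; exists e.
- move=> k; have [e he Phik] := ext_p k; exists (nth 0 e j), e => // i.
  rewrite size_rcons ltnS leq_eqVlt nth_rcons => /orP [/eqP ->|lt_ij].
    by rewrite ltnn eqxx.
  by rewrite lt_ij he.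
move=> k; apply: fin_or_cofin_ext (fin_or_cofin_holds
  (foldr (@GRing.Exists K) (Phi k) (iota j.+1 (M k))) p j) => x.
rewrite set_nthE ltnn subnn cats1.
split=> [/GRing.foldExistsP [e he Phik]|[e he Phik]].
  exists e => // i; rewrite size_rcons => lt_ij.
  by rewrite he // inE mem_iota negb_and -ltnNge lt_ij.
apply/GRing.foldExistsP; exists (mkseq (nth 0 e) (j.+1 + M k)).
  move=> i; rewrite inE mem_iota negb_and -ltnNge -leqNgt => /orP [lt|ge].
    by rewrite nth_mkseq ?ltn_addr // he // size_rcons.
  have le_i : (j.+1 <= i)%N by apply: leq_trans ge; apply: leq_addr.
  by rewrite !nth_default ?size_mkseq ?size_rcons.
by apply: Phi_local Phik => i lt_ik; rewrite nth_mkseq // ltn_addl.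
Qed.

Definition extend_prefix (p : {p | extendable p}) : {p | extendable p} :=
  let: exist x hx := constructive_indefinite_description _ (extendable_rcons (svalP p))
  in exist _ (rcons (sval p) x) hx.

Definition prefix (j : nat) : seq K :=
  sval (iter j extend_prefix (exist _ [::] extendable_nil)).

Lemma prefixS j : exists x, prefix j.+1 = rcons (prefix j) x.
Proof.
rewrite /prefix /= /extend_prefix.
by case: (constructive_indefinite_description _ _) => x ? /=; exists x.
Qed.

Lemma prefix_extendable j : extendable (prefix j).
Proof. exact: svalP. Qed.

Lemma size_prefix j : size (prefix j) = j.
Proof. by elim: j => [|j IH] //; have [x ->] := prefixS j; rewrite size_rcons IH. Qed.

Lemma nth_prefix j d i : (i < j)%N -> nth 0 (prefix (j + d)) i = nth 0 (prefix j) i.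
Proof.
move=> lt_ij; elim: d => [|d IH]; first by rewrite addn0.
rewrite addnS -IH.
have [x ->] := prefixS (j + d); rewrite nth_rcons size_prefix.
by rewrite (leq_trans lt_ij (leq_addr _ _)).
Qed.

Definition limit_assignment (i : nat) : K := nth 0 (prefix i.+1) i.

Lemma holds_limit_assignment k : GRing.holds (mkseq limit_assignment (M k)) (Phi k).
Proof.
have [e he Phik] := prefix_extendable (M k) k.
apply: Phi_local Phik => i lt_ik.
rewrite nth_mkseq // he ?size_prefix // /limit_assignment.
by rewrite -(subnKC lt_ik) nth_prefix.
Qed.

End FormulaCompactness.

Section Regroup.
Variables (K : fieldType) (m n : nat).

Lemma kpoly_sum_eq0 (F : kpoly K m n) (g : seq (var m n) -> K) :
  (forall mu mu', perm_eq mu mu' -> g mu = g mu') ->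
  (forall mu, kcoef F mu != 0 -> g mu = 0) ->
  \sum_(t <- F) t.1 * g t.2 = 0.
Proof.
move=> gperm; move: {2}(size F) (leqnn (size F)) => sz.
elim: sz F => [|sz IH] F; first by rewrite leqn0 => /nilP -> _; rewrite big_nil.
case: F => [|t0 F'] hsz hF; first by rewrite big_nil.
set F := t0 :: F' in hsz hF *.
rewrite (bigID (fun t => perm_eq t.2 t0.2)) /=.
have -> : \sum_(t <- F | perm_eq t.2 t0.2) t.1 * g t.2 = kcoef F t0.2 * g t0.2.
  by rewrite /kcoef mulr_suml; apply: eq_bigr => t ht; rewrite (gperm _ _ ht).
have -> : kcoef F t0.2 * g t0.2 = 0.
  by case: (eqVneq (kcoef F t0.2) 0) => [->|/hF ->]; rewrite ?mul0r ?mulr0.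
rewrite add0r -big_filter; apply: IH.
  rewrite size_filter; move: hsz; rewrite /F /= perm_refl /=.
  by move=> hsz; apply: leq_trans (count_size _ _) _.
move=> mu; rewrite /kcoef big_filter_cond.
case hmu: (perm_eq mu t0.2).
  rewrite big1 ?eqxx // => t /andP [ht1 ht2].
  by move: ht1; rewrite (perm_trans ht2 hmu).
rewrite (eq_bigl (fun t => perm_eq t.2 mu)); first exact: hF.
move=> t /=; case ht: (perm_eq t.2 mu); rewrite ?andbF // andbT.
by apply/negP => ht0; rewrite perm_sym in ht; move: hmu; rewrite (perm_trans ht ht0).
Qed.

Lemma keval_in_subring (N : nat) (F : kpoly K m n) (a b : 'I_n -> mi m -> K) :
  in_subring N F -> (forall i J, (mnorm J <= N)%N -> a i J = b i J) ->
  keval F a = keval F b.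
Proof.
move=> hF hab; apply/eqP; rewrite -subr_eq0; apply/eqP.
pose g (mu : seq (var m n)) := \prod_(v <- mu) a v.1 v.2 - \prod_(v <- mu) b v.1 v.2.
have -> : keval F a - keval F b = \sum_(t <- F) t.1 * g t.2.
  by rewrite /keval -sumrB; apply: eq_bigr => t _; rewrite mulrBr.
apply: kpoly_sum_eq0 => [mu mu' hp|mu /hF /allP small].
  by rewrite /g (perm_big _ hp) (perm_big _ hp).
by apply/eqP; rewrite subr_eq0; apply/eqP/eq_big_seq => v /small; apply: hab.
Qed.

Lemma keval_eq (F : kpoly K m n) (a b : 'I_n -> mi m -> K) :
  (forall t v, t \in F -> v \in t.2 -> a v.1 v.2 = b v.1 v.2) ->
  keval F a = keval F b.
Proof.
move=> h; rewrite /keval; apply: eq_big_seq => t tF; congr (_ * _).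
by apply: eq_big_seq => v vt; exact: (h t v tF vt).
Qed.

End Regroup.

Lemma exists_least (P : nat -> Prop) :
  (exists N, P N) -> exists N, P N /\ forall N', P N' -> (N <= N')%N.
Proof.
move=> [N0 hN0]; elim/ltn_ind: N0 hN0 => N0 IH hN0.
case: (classic (exists N', (N' < N0)%N /\ P N')) => [[N' [lt hN']]|hno].
  exact: IH lt hN'.
exists N0; split => // N' hN'; rewrite leqNgt; apply/negP => lt.
by apply: hno; exists N'.
Qed.

Section Main.
Variables (K : closedFieldType) (m n s : nat) (Ps : 'I_s -> dpoly K m n)
  (S : 'I_n -> mi m -> Prop).

(* The conditions on the values a_{i,J} = Theta(J) phi_i (0) of a solution that involve
   only multi-indices of norm at most k. *)
Definition sol_upto k (a : 'I_n -> mi m -> K) :=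
  (forall l I, (mnorm I <= k)%N -> keval (Fpoly Ps l I) a = 0) /\
  (forall i J, (mnorm J <= k)%N -> (a i J = 0 <-> ~ S i J)).

Lemma sol_uptoS k a : sol_upto k.+1 a -> sol_upto k a.
Proof.
by move=> [h1 h2]; split=> [l I hI|i J hJ]; [apply: h1|apply: h2]; exact: ltnW.
Qed.

Definition box k : seq (mi m) := [seq tomi L | L <- enum {ffun 'I_m -> 'I_k.+1}].

Lemma mem_box k I : (mnorm I <= k)%N -> I \in box k.
Proof.
move=> hI; apply/mapP; exists [ffun j => inord (I j)]; first by rewrite mem_enum.
apply/ffunP => j; rewrite !ffunE val_inordK // ltnS.
exact: leq_trans (leq_mnorm I j) hI.
Qed.

Lemma mnorm_box k I : I \in box k -> (mnorm I <= k)%N.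
Proof.
by case/mapP => L _ ->; apply: mnorm_leq => j; rewrite ffunE -ltnS; exact: ltn_ord.
Qed.

Definition level_vars k : seq (var m n) :=
  flatten [seq flatten [seq t.2 | t <- Fpoly Ps l I0] | l <- enum 'I_s, I0 <- box k]
  ++ [seq (i, J) | i <- enum 'I_n, J <- box k].

(* The unknown a_v is coded by the variable number [pickle v]. *)
Definition level_bound k := (\max_(v <- level_vars k) (pickle v).+1)%N.

Lemma pickle_lt_level_bound k v : v \in level_vars k -> (pickle v < level_bound k)%N.
Proof. by move=> hv; apply: (@leq_bigmax_seq _ _ xpredT). Qed.

Lemma mem_level_vars_F k l I t v : (mnorm I <= k)%N -> t \in Fpoly Ps l I ->
  v \in t.2 -> v \in level_vars k.
Proof.
move=> hI ht hv; rewrite mem_cat; apply/orP; left.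
apply/flattenP; exists (flatten [seq t.2 | t <- Fpoly Ps l I]).
  by apply: (allpairs_f (fun l I => flatten [seq t.2 | t <- Fpoly Ps l I]));
    rewrite ?mem_enum ?mem_box.
by apply/flattenP; exists t.2 => //; apply: map_f.
Qed.

Lemma mem_level_vars_S k i J : (mnorm J <= k)%N -> (i, J) \in level_vars k.
Proof.
move=> hJ; rewrite mem_cat; apply/orP; right.
by apply: (allpairs_f (fun i J => (i, J))); rewrite ?mem_enum ?mem_box.
Qed.

Lemma sol_upto_local k (a b : 'I_n -> mi m -> K) :
  (forall v, v \in level_vars k -> a v.1 v.2 = b v.1 v.2) -> sol_upto k a -> sol_upto k b.
Proof.
move=> hab [h1 h2]; split=> [l I hI|i J hJ].
  rewrite -(h1 l I hI); apply: keval_eq => t v ht hv.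
  by rewrite hab //; apply: mem_level_vars_F ht hv.
by rewrite -(hab (i, J)) ?mem_level_vars_S //; apply: h2.
Qed.

Definition env_family (e : seq K) : 'I_n -> mi m -> K :=
  fun i J => nth 0 e (pickle (i, J)).

Definition mon_term (mon : seq (var m n)) : GRing.term K :=
  foldr (fun v t => GRing.Mul (GRing.Var K (pickle v)) t) (GRing.Const 1) mon.

Definition kpoly_term (F : kpoly K m n) : GRing.term K :=
  foldr (fun t acc => GRing.Add (GRing.Mul (GRing.Const t.1) (mon_term t.2)) acc)
    (GRing.Const 0) F.

Lemma eval_mon_term e mon :
  GRing.eval e (mon_term mon) = \prod_(v <- mon) env_family e v.1 v.2.
Proof.
elim: mon => [|v mon IH] /=; first by rewrite big_nil.
by rewrite big_cons IH /env_family -surjective_pairing.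
Qed.

Lemma eval_kpoly_term e F : GRing.eval e (kpoly_term F) = keval F (env_family e).
Proof.
rewrite /keval; elim: F => [|t F IH] /=; first by rewrite big_nil.
by rewrite big_cons IH eval_mon_term.
Qed.

Definition Sb i J : bool := if excluded_middle_informative (S i J) then true else false.

Lemma SbP i J : reflect (S i J) (Sb i J).
Proof. by rewrite /Sb; case: excluded_middle_informative => h; constructor. Qed.

Definition big_and (fs : seq (GRing.formula K)) := foldr (@GRing.And K) GRing.True fs.

Lemma holds_big_and (T : eqType) e (F : T -> GRing.formula K) (r : seq T) :
  GRing.holds e (big_and (map F r)) <-> forall x, x \in r -> GRing.holds e (F x).
Proof.
elim: r => [|y r IH] /=; first by split.
rewrite IH; split=> [[hy hr] x|h].
  by rewrite in_cons => /orP [/eqP ->|/hr].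
by split=> [|x hx]; apply: h; rewrite ?mem_head // in_cons hx orbT.
Qed.

Definition supp_formula i J : GRing.formula K :=
  let: atom := GRing.Equal (GRing.Var K (pickle (i, J))) (GRing.Const 0) in
  if Sb i J then GRing.Not atom else atom.

Definition level_formula k : GRing.formula K :=
  GRing.And
   (big_and [seq GRing.Equal (kpoly_term (Fpoly Ps p.1 p.2)) (GRing.Const 0)
              | p <- [seq (l, I0) | l <- enum 'I_s, I0 <- box k]])
   (big_and [seq supp_formula p.1 p.2 | p <- [seq (i, J) | i <- enum 'I_n, J <- box k]]).

Lemma holds_level_formula e k :
  GRing.holds e (level_formula k) <-> sol_upto k (env_family e).
Proof.
rewrite /level_formula /= !holds_big_and; split=> [[hF hS]|[hF hS]]; split.
- move=> l I hI; rewrite -eval_kpoly_term; apply: (hF (l, I)).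
  by apply: (allpairs_f pair); rewrite ?mem_enum ?mem_box.
- move=> i J hJ; have := hS (i, J); rewrite /supp_formula /env_family /=.
  have hiJ : (i, J) \in [seq (i, J) | i <- enum 'I_n, J <- box k].
    by apply: (allpairs_f pair); rewrite ?mem_enum ?mem_box.
  move/(_ hiJ).
  by case: SbP => /= hSb; split=> // h.
- case=> [l I] /allpairsP [[l' I'] /= [_ hI [-> ->]]] /=.
  by rewrite eval_kpoly_term; apply: hF; apply: mnorm_box.
- case=> [i J] /allpairsP [[i' J'] /= [_ hJ [-> ->]]].
  have := hS i' J' (mnorm_box hJ); rewrite /supp_formula /env_family /=.
  by case: SbP => /= hSb h; [move/h | apply/h].
Qed.

Lemma level_formula_local k (e e' : seq K) :
  (forall j, (j < level_bound k)%N -> nth 0 e j = nth 0 e' j) ->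
  GRing.holds e (level_formula k) -> GRing.holds e' (level_formula k).
Proof.
move=> ee' /holds_level_formula he; apply/holds_level_formula.
apply: sol_upto_local he => v /pickle_lt_level_bound.
by rewrite /env_family -surjective_pairing; apply: ee'.
Qed.

Lemma level_formulaS k e :
  GRing.holds e (level_formula k.+1) -> GRing.holds e (level_formula k).
Proof. by move/holds_level_formula/sol_uptoS/holds_level_formula. Qed.

Lemma sol_all_levels (uncountable : forall f : nat -> K, exists x : K, forall j, f j != x) :
  (forall k, exists a, sol_upto k a) -> exists a, forall k, sol_upto k a.
Proof.
move=> sat.
have Phi_sat k : exists e, GRing.holds e (level_formula k).
  have [a ha] := sat k.
  exists (mkseq (fun j => if @unpickle (var m n) j is Some v then a v.1 v.2 else 0)
                (level_bound k)).
  apply/holds_level_formula; apply: sol_upto_local ha => v /pickle_lt_level_bound lt_v.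
  by rewrite /env_family -surjective_pairing nth_mkseq // pickleK.
pose a := limit_assignment uncountable level_formula_local level_formulaS Phi_sat.
exists (fun i J => a (pickle (i, J))) => k.
have /holds_level_formula := holds_limit_assignment uncountable level_formula_local
  level_formulaS Phi_sat k.
apply: sol_upto_local => v /pickle_lt_level_bound lt_v.
by rewrite /env_family -surjective_pairing nth_mkseq.
Qed.

Lemma exists_isNk k : exists N, isNk Ps k N.
Proof.
apply: exists_least; exists (\max_(v <- level_vars k) mnorm v.2)%N.
move=> l I hI mu hmu.
have : has (fun t => perm_eq t.2 mu) (Fpoly Ps l I).
  apply: contraNT hmu => /hasPn h; rewrite /kcoef big1_seq // => t /andP [pt tin].
  by rewrite (negbTE (h t tin)) in pt.
case/hasP => t tin pt; apply/allP => v vmu.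
have vt : v \in t.2 by rewrite (perm_mem pt).
exact: (@leq_bigmax_seq _ _ xpredT (fun v : var m n => mnorm v.2))
  (mem_level_vars_F hI tin vt) isT.
Qed.

(* Outside the box of side N, a tuple of A_{k,S} is extended by the value 1 on S and
   0 elsewhere, which costs nothing since no F_{l,I} with ||I|| <= k involves these. *)
Lemma sol_upto_of_in_AS k N (a : tupl K m n N) :
  bounds_ok Ps k N -> in_AS Ps k S a -> exists b, sol_upto k b.
Proof.
move=> hN [hA hS].
exists (fun i J => if (mnorm J <= N)%N then a i [ffun j => inord (J j)]
                   else if Sb i J then 1 else 0); split.
  move=> l I hI; rewrite -(hA l I hI); apply: (keval_in_subring (hN l I hI)) => i J hJ.
  by rewrite /ext_tupl hJ.
move=> i J hJ; case: ifP => hJN.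
  have eqJ : lowJ [ffun j => (inord (J j) : 'I_N.+1)] = J.
    apply/ffunP => j; rewrite !ffunE val_inordK // ltnS.
    exact: leq_trans (leq_mnorm J j) hJN.
  by have := hS i [ffun j => (inord (J j) : 'I_N.+1)]; rewrite eqJ.
by case: SbP => hSb; split=> // /eqP; rewrite oner_eq0.
Qed.

(* By Theta_dpeval, F_{l,I}(a) = 0 says that the I-th coefficient of P_l(phi) vanishes. *)
Lemma solution_of_sol_all (char0 : [pchar K] =i pred0) (a : 'I_n -> mi m -> K) :
  (forall k, sol_upto k a) ->
  exists phi : 'I_n -> pser K m,
    (forall l : 'I_s, dpeval (Ps l) phi = @pzero K m) /\
    (forall (i : 'I_n) (J : mi m), Supp (phi i) J <-> S i J).
Proof.
move=> ha; pose phi (i : 'I_n) : pser K m := fun J => a i J / mifact K J.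
have hTh : (fun i J => Theta J (phi i) (mi0 m)) = a.
  apply: functional_extensionality => i; apply: functional_extensionality => J.
  by rewrite Theta_at0 /phi mulrC divfK // mifact_neq0.
exists phi; split.
  move=> l; apply: functional_extensionality => I.
  have : mifact K I * dpeval (Ps l) phi I = 0.
    by rewrite -Theta_at0 Theta_dpeval dpeval_at0 hTh; apply: (ha (mnorm I)).1.
  by move/eqP; rewrite mulf_eq0 (negbTE (mifact_neq0 _ char0)) /= => /eqP.
move=> i J; have := (ha (mnorm J)).2 i J (leqnn _).
rewrite /Supp /phi mulf_eq0 invr_eq0 (negbTE (mifact_neq0 _ char0)) orbF => h.
by split=> [/eqP h1|hSJ]; [apply: NNPP => /h | apply/eqP => /h].
Qed.

End Main.

Theorem mainTheorem12
  (K : closedFieldType)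
  (char0 : [pchar K] =i pred0)
  (uncountable : forall f : nat -> K, exists x : K, forall j, f j != x)
  (m n : nat) (hm : (1 <= m)%N) (hn : (1 <= n)%N)
  (s : nat) (Ps : 'I_s -> dpoly K m n)
  (S : 'I_n -> mi m -> Prop) :
  ~ (exists phi : 'I_n -> pser K m,
        (forall l : 'I_s, dpeval (Ps l) phi = @pzero K m) /\
        (forall (i : 'I_n) (J : mi m), Supp (phi i) J <-> S i J)) ->
  exists k N : nat, isNk Ps k N /\ forall a : tupl K m n N, ~ in_AS Ps k S a.
Proof.
move=> no_solution; apply: NNPP => all_AS_nonempty; apply: no_solution.
have levels k : exists a, sol_upto Ps S k a.
  have [N hN] := exists_isNk Ps k.
  have [a ha] : exists a : tupl K m n N, in_AS Ps k S a.
    apply: NNPP => no_a; apply: all_AS_nonempty; exists k, N.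
    by split=> // a ha; apply: no_a; exists a.
  exact: sol_upto_of_in_AS hN.1 ha.
have [a ha] := sol_all_levels uncountable levels.
exact (solution_of_sol_all char0 ha).
Qed.
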